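(* Let $(f,\varphi):(X_1,\kappa_1,A_1)\to(X_2,\kappa_2,A_2)$ be a sober monomorphism in $\mathbf{Sys}(L)$, i.e. a monomorphism such that for every $p\in Pt_L(A_1)$ and $y\in X_2$ with $p\circ\varphi=\ell_2(y)$ there exists $x\in X_1$ with $\ell_1(x)=p$ and $f(x)=y$. If $(X_2,\kappa_2,A_2)$ is sober, then $(X_1,\kappa_1,A_1)$ is sober.
   Context: Fix a variety $\mathbf{A}$ of algebras (full subcategory of the category of $\Omega$-algebras and homomorphisms closed under products, subalgebras and homomorphic images); standing assumptions of the paper: $\mathbf{A}$ has set-indexed coproducts and a free algebra over a singleton. Fix an $\mathbf{A}$-algebra $L$; $L^X$ is the power algebra. An affine system is $(X,\kappa,A)$ with $X$ a set, $A$ an algebra, $\kappa:A\to L^X$ a homomorphism; a morphism $(f,\varphi):(X_1,\kappa_1,A_1)\to(X_2,\kappa_2,A_2)$ is a map $f:X_1\to X_2$ with a homomorphism $\varphi:A_2\to A_1$ such that $\kappa_1(\varphi(a))(x)=\kappa_2(a)(f(x))$; composition $(g,\psi)\circ(f,\varphi)=(g\circ f,\varphi\circ\psi)$; this is $\mathbf{Sys}(L)$. For an algebra $A$, $Pt_L(A)$ is the set of homomorphisms $A\to L$; for a system $(X_i,\kappa_i,A_i)$, $\ell_i:X_i\to Pt_L(A_i)$ is $\ell_i(x)(a)=\kappa_i(a)(x)$; the system is sober if $\ell_i$ is bijective. *)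

Set Implicit Arguments.
Unset Strict Implicit.

Record signature := Signature { op_sym : Type; arity : op_sym -> Type }.

Section UA.
Variable S : signature.

Record algebra := Algebra {
  carrier :> Type;
  ops : forall o : op_sym S, (arity o -> carrier) -> carrier }.
Arguments ops a o _ : clear implicits.

Definition is_hom (A B : algebra) (h : A -> B) : Prop :=
  forall (o : op_sym S) (args : arity o -> A),
    h (ops A o args) = ops B o (fun i => h (args i)).

Definition prod_alg (I : Type) (F : I -> algebra) : algebra :=
  {| carrier := forall i : I, F i;
     ops := fun o args i => ops (F i) o (fun j => args j i) |}.

Definition power (L : algebra) (X : Type) : algebra := prod_alg (fun _ : X => L).

(* A variety: class of algebras closed under products, subalgebras
   (i.e. domains of injective homomorphisms into members) and homomorphic
   images (codomains of surjective homomorphisms from members). *)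
Definition is_variety (V : algebra -> Prop) : Prop :=
  (forall (I : Type) (F : I -> algebra), (forall i, V (F i)) -> V (prod_alg F)) /\
  (forall (A B : algebra) (h : B -> A), V A -> is_hom h ->
       (forall x y, h x = h y -> x = y) -> V B) /\
  (forall (A B : algebra) (h : A -> B), V A -> is_hom h ->
       (forall y, exists x, h x = y) -> V B).

Definition has_coproducts (V : algebra -> Prop) : Prop :=
  forall (I : Type) (F : I -> algebra), (forall i, V (F i)) ->
  exists (C : algebra) (inj : forall i, F i -> C),
    V C /\ (forall i, is_hom (inj i)) /\
    forall (B : algebra) (g : forall i, F i -> B), V B -> (forall i, is_hom (g i)) ->
      exists h : C -> B, is_hom h /\ (forall i x, h (inj i x) = g i x) /\
        forall h' : C -> B, is_hom h' -> (forall i x, h' (inj i x) = g i x) ->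
          forall c, h' c = h c.

Definition has_free_singleton (V : algebra -> Prop) : Prop :=
  exists (F : algebra) (gen : F), V F /\
    forall (B : algebra) (b : B), V B ->
      exists h : F -> B, is_hom h /\ h gen = b /\
        forall h' : F -> B, is_hom h' -> h' gen = b -> forall c, h' c = h c.

Section Sys.
Variable V : algebra -> Prop.
Variable L : algebra.

Record system := System {
  pts : Type;
  alg : algebra;
  alg_in : V alg;
  kappa : alg -> power L pts;
  kappa_hom : is_hom kappa }.
Arguments kappa : clear implicits.

Record sys_morph (T1 T2 : system) := SysMorph {
  mf : pts T1 -> pts T2;
  mphi : alg T2 -> alg T1;
  mphi_hom : is_hom mphi;
  mcompat : forall (a : alg T2) (x : pts T1), kappa T1 (mphi a) x = kappa T2 a (mf x) }.

Lemma comp_hom (A B C : algebra) (p : A -> B) (q : B -> C) :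
  is_hom p -> is_hom q -> is_hom (fun a => q (p a)).
Proof. intros hp hq o args. rewrite hp. apply hq. Qed.

Definition sys_comp (T1 T2 T3 : system) (m2 : sys_morph T2 T3) (m1 : sys_morph T1 T2)
  : sys_morph T1 T3.
Proof.
  refine (@SysMorph T1 T3 (fun x => mf m2 (mf m1 x)) (fun a => mphi m1 (mphi m2 a))
            (comp_hom (mphi_hom m2) (mphi_hom m1)) _).
  intros a x. rewrite (mcompat m1). apply (mcompat m2).
Defined.

Definition sys_mono (T1 T2 : system) (m : sys_morph T1 T2) : Prop :=
  forall (Z : system) (g h : sys_morph Z T1), sys_comp m g = sys_comp m h -> g = h.

Definition Pt (A : algebra) : Type := { p : A -> L | is_hom p }.

Lemma ell_hom (T : system) (x : pts T) : is_hom (fun a => kappa T a x).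
Proof.
  intros o args. cbn. rewrite (kappa_hom (s:=T)). reflexivity.
Qed.

Definition ell (T : system) (x : pts T) : Pt (alg T) :=
  exist _ (fun a => kappa T a x) (ell_hom x).

Definition sober (T : system) : Prop :=
  (forall x y : pts T, ell x = ell y -> x = y) /\
  (forall p : Pt (alg T), exists x : pts T, ell x = p).

Definition sober_mono (T1 T2 : system) (m : sys_morph T1 T2) : Prop :=
  sys_mono m /\
  forall (p : Pt (alg T1)) (y : pts T2),
    (fun a => proj1_sig p (mphi m a)) = proj1_sig (ell y) ->
    exists x : pts T1, ell x = p /\ mf m x = y.

End Sys.
End UA.

From Stdlib Require Import ProofIrrelevance FunctionalExtensionality.

Set Implicit Arguments.

(* Surjectivity of [ell] on T1: for a point p of A1, the point p o phi of A2
   is [ell y] for some y because T2 is sober, and the sober-monomorphism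
   property lifts (p, y) to an x with [ell x = p].  Injectivity: if
   [ell x = ell x'] then [ell (f x) = ell (f x')], so [f x = f x'] since T2 is
   sober; the two morphisms (const x, ell x) and (const x', ell x') from the
   one-point system (1, L) to T1 are then equalised by the monomorphism
   (f, phi), hence equal, and x = x'. *)

Section SoberMono.
Variables (S : signature) (V : algebra S -> Prop) (L : algebra S).

Lemma sys_morph_eq (T1 T2 : system V L) (m m' : sys_morph T1 T2) :
  mf m = mf m' -> mphi m = mphi m' -> m = m'.
Proof.
  destruct m as [f phi hphi c], m' as [f' phi' hphi' c']; cbn.
  intros <- <-. f_equal; apply proof_irrelevance.
Qed.

Lemma ell_eqP (T : system V L) (x x' : pts T) :
  ell x = ell x' <-> forall a, kappa a x = kappa a x'.
Proof.
  split.
  - intros E a. exact (f_equal (fun p : Pt L (alg T) => proj1_sig p a) E).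
  - intros E. apply eq_sig_hprop; [intros; apply proof_irrelevance |].
    apply functional_extensionality. exact E.
Qed.

Lemma ell_mf_eq (T1 T2 : system V L) (m : sys_morph T1 T2) (x x' : pts T1) :
  ell x = ell x' -> ell (mf m x) = ell (mf m x').
Proof.
  intros E. apply ell_eqP. intro a.
  rewrite <- !(mcompat m). now apply ell_eqP.
Qed.

Definition pt_pullback (T1 T2 : system V L) (m : sys_morph T1 T2)
  (p : Pt L (alg T1)) : Pt L (alg T2) :=
  exist _ (fun a => proj1_sig p (mphi m a)) (comp_hom (mphi_hom m) (proj2_sig p)).

Lemma sober_mono_ell_surj (T1 T2 : system V L) (m : sys_morph T1 T2) :
  sober_mono m -> (forall q : Pt L (alg T2), exists y, ell y = q) ->
  forall p : Pt L (alg T1), exists x, ell x = p.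
Proof.
  intros [_ lift] surj2 p.
  destruct (surj2 (pt_pullback m p)) as [y Hy].
  destruct (lift p y) as [x [Hx _]]; [now rewrite Hy |].
  now exists x.
Qed.

Hypothesis HL : V L.

Definition point_system : system V L :=
  @System S V L unit L HL (fun l _ => l) (fun o args => eq_refl).

Definition point_morph {T : system V L} (x : pts T) : sys_morph point_system T :=
  @SysMorph S V L point_system T (fun _ => x) (fun a => kappa a x)
    (ell_hom x) (fun a _ => eq_refl).

Lemma sys_mono_ell_mf_inj (T1 T2 : system V L) (m : sys_morph T1 T2) (x x' : pts T1) :
  sys_mono m -> ell x = ell x' -> mf m x = mf m x' -> x = x'.
Proof.
  intros mono Eell Ef.
  assert (Epoint : point_morph x = point_morph x').
  { apply mono, sys_morph_eq; cbn.
    - now rewrite Ef.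
    - apply functional_extensionality. intro a. now apply ell_eqP. }
  exact (f_equal (fun k : sys_morph point_system T1 => mf k tt) Epoint).
Qed.

End SoberMono.

Theorem proposition20 (S : signature) (V : algebra S -> Prop)
  (HV : is_variety V) (Hcop : has_coproducts V) (Hfree : has_free_singleton V)
  (L : algebra S) (HL : V L)
  (T1 T2 : system V L) (m : sys_morph T1 T2) :
  sober_mono m -> sober T2 -> sober T1.
Proof.
  intros Hsm [inj2 surj2]. split.
  - intros x x' E.
    apply (sys_mono_ell_mf_inj HL (proj1 Hsm) E).
    apply inj2, ell_mf_eq, E.
  - exact (sober_mono_ell_surj Hsm surj2).
Qed.
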